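(* (2) Let $q$ be a prime power and let $v\ge 2$, $m,s,t$ be positive integers with $t\ge 2$, $m\le q+1$, $s\le t\le ms$. Then $K_{qv}^{RT}(m,s,ms-t)\le q^{t}\,K_{v}^{RT}(m,s,ms-t)$. (3) Let $q$ be a prime power, $v\ge 2$ and $t\ge 2$ integers. Then $K_{(q-1)v}^{RT}(q+1,t,qt)\le (q^{t}-2)\,K_{v}^{RT}(q+1,t,qt)$.
   Context: For positive integers $m,s$, the RT poset $[m\times s]$ is the set $\{1,\ldots,ms\}$ partitioned into $m$ blocks $B_i=\{is+1,\ldots,(i+1)s\}$; each block is a chain under the usual order of the integers, and elements of different blocks are incomparable. An ideal is a down-closed subset; $\langle A\rangle$ denotes the smallest ideal containing $A$. For $x,y\in\mathbb{Z}_q^{ms}$, $d_{RT}(x,y)=|\langle\{i:x_i\neq y_i\}\rangle|$. A code $C\subseteq \mathbb{Z}_q^{ms}$ is an $R$-covering if every $x\in\mathbb{Z}_q^{ms}$ has some $c\in C$ with $d_{RT}(x,c)\le R$; $K_q^{RT}(m,s,R)$ is the smallest size of an $R$-covering (for alphabet size $1$, $\mathbb{Z}_1^{ms}$ is a single point). *)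

From mathcomp Require Import all_boot.
Set Implicit Arguments. Unset Strict Implicit. Unset Printing Implicit Defensive.

(* RT poset [m x s]: positions are pairs (i, j), i : 'I_m the block index,
   j : 'I_s the position inside the block (block B_i = {i*s+1,...,(i+1)*s},
   position (i,j) corresponding to i*s + j + 1). *)
Definition rt_le (m s : nat) (a b : 'I_m * 'I_s) : bool :=
  (a.1 == b.1) && (a.2 <= b.2).

Definition rt_ideal (m s : nat) (I : {set 'I_m * 'I_s}) : bool :=
  [forall a, forall b, (rt_le a b && (b \in I)) ==> (a \in I)].

Definition rt_gen (m s : nat) (A : {set 'I_m * 'I_s}) : {set 'I_m * 'I_s} :=
  \bigcap_(I | rt_ideal I && (A \subset I)) I.

Definition rt_word (q m s : nat) := {ffun 'I_m * 'I_s -> 'I_q}.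

Definition d_RT (q m s : nat) (x y : rt_word q m s) : nat :=
  #|rt_gen [set p | x p != y p]|.

Definition rt_covering (q m s R : nat) (C : {set rt_word q m s}) : bool :=
  [forall x : rt_word q m s, exists c in C, d_RT x c <= R].

Definition rt_cov_size (q m s R : nat) : pred nat :=
  fun n => [exists C : {set rt_word q m s}, rt_covering R C && (#|C| == n)].

Lemma rt_covering_exists (q m s R : nat) :
  exists n, rt_cov_size q m s R n.
Proof.
exists #|[set: rt_word q m s]|; apply/existsP; exists [set: rt_word q m s].
rewrite eqxx andbT; apply/forallP => x; apply/existsP; exists x.
rewrite in_setT /=.
rewrite /d_RT.
have -> : [set p | x p != x p] = set0 by apply/setP => p; rewrite !inE eqxx.
have -> : rt_gen (set0 : {set 'I_m * 'I_s}) = set0.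
  apply/setP => p; rewrite inE; apply/negbTE/negP => /bigcapP H.
  suff : p \in (set0 : {set 'I_m * 'I_s}) by rewrite inE.
  apply: H; rewrite sub0set andbT.
  by apply/forallP => a; apply/forallP => b; rewrite inE andbF.
by rewrite cards0.
Qed.

Definition K_RT (q m s R : nat) : nat :=
  ex_minn (rt_covering_exists q m s R).

Definition prime_power (q : nat) : Prop :=
  exists p k, prime p /\ 0 < k /\ q = p ^ k.

(* Both bounds come from codes [D] over [Z_r] that are onto outside every ideal
   of size [R]: pairing [D] with an [R]-covering over [Z_v] coordinatewise,
   reading [Z_(rv)] as [Z_r * Z_v], gives an [R]-covering over [Z_(rv)] that is
   [#|D|] times larger.  For [R = m s - t], [m <= q + 1] and [s <= t], such a code
   of size [q^t] is given by the polynomials of degree [< t] over [F_q]: each block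
   lists Taylor coefficients at a point of [F_q] or at infinity, and a nonzero
   polynomial vanishing outside an ideal of size [m s - t] would have more roots,
   counted with multiplicity, than its degree.  For (3), merging in each
   coordinate the symbols of two codewords [c1], [c2] turns the code without
   [c1], [c2] into one over [Z_(q-1)] with the same property: a word reached only
   by [c1] or [c2] can be flipped in either of two free coordinates, and one of
   the two codewords this forces avoids both. *)

From mathcomp Require Import all_boot all_algebra all_field.
From mathcomp Require Import zify.
Set Implicit Arguments. Unset Strict Implicit. Unset Printing Implicit Defensive.
Import GRing.Theory.

Lemma card_ord_gt s j : #|[set k : 'I_s | j < k]| = s - j.+1.
Proof.
rewrite -sum1_card (eq_bigl (fun k : 'I_s => xpredT k && (j < k))) => [|k].
  by rewrite -(big_geq_mkord j.+1 s xpredT (fun=> 1)) sum_nat_const_nat muln1.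
by rewrite inE.
Qed.

Section Ideals.
Variables m s : nat.
Implicit Types (A I J : {set 'I_m * 'I_s}) (p : 'I_m * 'I_s).

Lemma card_rt_positions : #|{: 'I_m * 'I_s}| = m * s.
Proof. by rewrite card_prod !card_ord. Qed.

Lemma cardsC_rt I : #|~: I| = m * s - #|I|.
Proof. by rewrite -card_rt_positions -(cardsC I) addKn. Qed.

Lemma rt_idealP I :
  reflect (forall a b, rt_le a b -> b \in I -> a \in I) (rt_ideal I).
Proof.
apply: (iffP forallP) => [hI a b hab hb | hI a].
  by have /forallP/(_ b)/implyP := hI a; apply; rewrite hab hb.
by apply/forallP => b; apply/implyP => /andP[]; apply: hI.
Qed.

Lemma rt_ideal0 : rt_ideal (set0 : {set 'I_m * 'I_s}).
Proof. by apply/rt_idealP => a b _; rewrite inE. Qed.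

Lemma rt_gen_sub A : A \subset rt_gen A.
Proof. by apply/bigcapsP => I /andP[]. Qed.

Lemma rt_gen_min A J : rt_ideal J -> A \subset J -> rt_gen A \subset J.
Proof. by move=> hJ hA; apply: bigcap_inf; rewrite hJ hA. Qed.

Lemma rt_gen_ideal A : rt_ideal (rt_gen A).
Proof.
apply/rt_idealP => a b hab /bigcapP hb; apply/bigcapP => I hI.
by move: (hI) => /andP[/rt_idealP hI' _]; apply: hI' hab (hb I hI).
Qed.

(* Adding a lowest missing position keeps the set down-closed. *)
Lemma rt_ideal_grow I : rt_ideal I -> #|I| < m * s ->
  exists2 p, p \notin I & rt_ideal (p |: I).
Proof.
move=> /rt_idealP hI hIc.
have /card_gt0P[p0] : 0 < #|~: I| by rewrite cardsC_rt subn_gt0.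
rewrite inE => hp0.
case: (arg_minnP (P := [pred p | p \notin I]) (fun p => val p.2) hp0) => p hp pmin.
exists p => //; apply/rt_idealP => a b /andP[/eqP ab1 ab2].
rewrite !inE => /predU1P[bp | bI]; last by rewrite (hI a b) ?orbT // /rt_le ab1 eqxx.
subst b; case: (boolP (a \in I)) => [_ | aI]; first by rewrite orbT.
have pa2 := pmin a aI; rewrite orbF.
case: a p ab1 ab2 pa2 {hp pmin aI} => [a1 a2] [p1 p2] /= -> ap pa.
by rewrite xpair_eqE eqxx -val_eqE eqn_leq ap pa.
Qed.

Lemma rt_ideal_extend I n : rt_ideal I -> #|I| <= n -> n <= m * s ->
  exists2 J, rt_ideal J & I \subset J /\ #|J| = n.
Proof.
move=> hI; elim: n => [|n IH] hIn hn.
  by exists I => //; split=> //; apply/eqP; rewrite -leqn0.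
move: hIn; rewrite leq_eqVlt => /predU1P[hIn | hIn]; first by exists I.
have [J' hJ' [IJ' hJ'c]] := IH hIn (ltnW hn).
have [p hp hpJ'] := rt_ideal_grow hJ' (ltac:(lia)).
exists (p |: J') => //; split; first exact: subset_trans IJ' (subsetUr _ _).
by rewrite cardsU1 hp hJ'c.
Qed.

Definition coblock I (i : 'I_m) : {set 'I_s} := [set j | (i, j) \notin I].

Lemma sum_card_coblock I : \sum_i #|coblock I i| = #|~: I|.
Proof.
rewrite -[RHS]sum1_card [RHS]big_mkcond.
rewrite [RHS](eq_bigr (fun p => if (p.1, p.2) \in ~: I then 1 else 0)) => [|[] //].
rewrite -(pair_bigA _ (fun i j => if (i, j) \in ~: I then 1 else 0)); apply: eq_bigr => i _.
by rewrite -sum1_card big_mkcond; apply: eq_bigr => j _; rewrite !inE.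
Qed.

Lemma card_coblock_le I i : #|coblock I i| <= s.
Proof. by rewrite -[s in _ <= s]card_ord max_card. Qed.

Lemma coblock_top I i (j : 'I_s) :
  rt_ideal I -> s - #|coblock I i| <= j -> (i, j) \notin I.
Proof.
move=> /rt_idealP hI; apply: contraTN => ijI; rewrite -ltnNge.
have : coblock I i \subset [set k : 'I_s | j < k].
  apply/subsetP => k; rewrite !inE ltnNge; apply: contra => kj.
  by apply: hI ijI; rewrite /rt_le eqxx.
move/subset_leq_card; rewrite card_ord_gt; have := ltn_ord j; lia.
Qed.

Lemma d_RT_le_ideal q (x y : rt_word q m s) I :
  rt_ideal I -> {in ~: I, x =1 y} -> d_RT x y <= #|I|.
Proof.
move=> hI xy; apply/subset_leq_card/rt_gen_min => //.
apply/subsetP => p; rewrite inE; apply: contraR => pI.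
by rewrite xy ?inE.
Qed.

Lemma d_RT_ideal_cover q (x y : rt_word q m s) R :
  d_RT x y <= R -> R <= m * s ->
  exists2 J, rt_ideal J & #|J| = R /\ {in ~: J, x =1 y}.
Proof.
move=> hxy hR; have hI0 := rt_gen_ideal [set p | x p != y p].
have [J hJ [I0J hJc]] := rt_ideal_extend hI0 hxy hR.
exists J => //; split=> // p; rewrite inE => pJ; apply/eqP; apply: contraR pJ => hp.
by apply: (subsetP I0J); apply: (subsetP (rt_gen_sub _)); rewrite inE.
Qed.

End Ideals.

Lemma K_RT_min q m s R (C : {set rt_word q m s}) :
  rt_covering R C -> K_RT q m s R <= #|C|.
Proof.
rewrite /K_RT; case: ex_minnP => n _ nmin hC; apply: nmin.
by apply/existsP; exists C; rewrite hC eqxx.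
Qed.

Lemma K_RT_witness q m s R :
  exists2 C : {set rt_word q m s}, rt_covering R C & #|C| = K_RT q m s R.
Proof.
by rewrite /K_RT; case: ex_minnP => n /existsP[C /andP[hC /eqP hCn]] _; exists C.
Qed.

(* For [R = m * s - t] these are the MDS codes of the RT metric. *)
Definition onto_off_ideals q m s R (D : {set rt_word q m s}) : Prop :=
  forall (x : rt_word q m s) (I : {set 'I_m * 'I_s}), rt_ideal I -> #|I| = R ->
  exists2 d, d \in D & {in ~: I, x =1 d}.

Lemma K_RT_mul_le r v m s R (D : {set rt_word r m s}) :
  R <= m * s -> onto_off_ideals R D ->
  K_RT (r * v) m s R <= #|D| * K_RT v m s R.
Proof.
move=> hR hD; have [C hC <-] := K_RT_witness v m s R.
pose pair_word (dc : rt_word r m s * rt_word v m s) : rt_word (r * v) m s :=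
  [ffun p => mxvec_index (dc.1 p) (dc.2 p)].
apply: leq_trans (K_RT_min (C := pair_word @: setX D C) _) _; last first.
  by rewrite -cardsX leq_imset_card.
have [split_sym _ split_symK] := curry_mxvec_bij r v.
apply/forallP => x.
pose x1 : rt_word r m s := [ffun p => (split_sym (x p)).1].
pose x2 : rt_word v m s := [ffun p => (split_sym (x p)).2].
have /existsP[c /andP[cC hc]] := forallP hC x2.
have [J hJ [hJc x2c]] := d_RT_ideal_cover hc hR.
have [d dD x1d] := hD x1 J hJ hJc.
apply/existsP; exists (pair_word (d, c)); rewrite imset_f ?inE ?dD //=.
rewrite -hJc; apply: d_RT_le_ideal => // p pJ.
rewrite ffunE /= -x1d // -x2c // !ffunE.
by case: (split_sym (x p)) (split_symK (x p) isT) => i j /= ->.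
Qed.

Lemma onto_off_ideals_card_gt1 n m s R (D : {set rt_word n.+2 m s}) :
  R < m * s -> onto_off_ideals R D -> 1 < #|D|.
Proof.
move=> hR hD.
have [|I hI [_ hIc]] := rt_ideal_extend (n := R) (rt_ideal0 m s) _ (ltnW hR).
  by rewrite cards0.
have /card_gt0P[p pI] : 0 < #|~: I| by rewrite cardsC_rt hIc subn_gt0.
have [c1 c1D x1c1] := hD [ffun=> ord0] I hI hIc.
have [c2 c2D x2c2] := hD [ffun=> ord_max] I hI hIc.
apply/card_gt1P; exists c1, c2; split=> //; apply/eqP => c12.
by have := x2c2 p pI; rewrite -c12 -x1c1 // !ffunE => /(congr1 val).
Qed.

Definition pair_other (T : eqType) (a b y : T) : T := if y == a then b else a.

Lemma pair_other_neq (T : eqType) (a b y : T) : a != b -> pair_other a b y != y.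
Proof. by move=> ab; rewrite /pair_other; case: ifP => [/eqP-> | /negbT]; rewrite eq_sym. Qed.

Lemma pair_other_mem (T : eqType) (a b y : T) : pair_other a b y \in [:: a; b].
Proof. by rewrite /pair_other !inE; case: ifP; rewrite eqxx ?orbT. Qed.

Lemma not_three_in_pair (T : eqType) (a b x y z : T) :
  x != y -> x != z -> y != z -> x \in [:: a; b] -> y \in [:: a; b] -> z \notin [:: a; b].
Proof.
rewrite !inE => xy xz yz /pred2P hx /pred2P hy; apply/negP => /pred2P hz.
by move: xy xz yz; case: hx hy hz => -> [] -> [] ->; rewrite ?eqxx.
Qed.

Section OrdMerge.
Variable n : nat.
Implicit Types a b y : 'I_n.+2.

Definition ord_merge a b y : 'I_n.+1 := odflt ord0 (unlift b (if y == b then a else y)).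

Lemma ord_merge_lift a b z : ord_merge a b (lift b z) = z.
Proof. by rewrite /ord_merge eq_sym (negbTE (neq_lift b z)) liftK. Qed.

Lemma ord_merge_pair a b y : y \in [:: a; b] -> ord_merge a b y = ord_merge a b a.
Proof. by rewrite !inE => /pred2P[]->; rewrite /ord_merge ?eqxx ?if_same. Qed.

End OrdMerge.

Section AlphabetReduction.
Variables (n m s R : nat) (D : {set rt_word n.+2 m s}) (c1 c2 : rt_word n.+2 m s).

Let mate p := if c2 p == c1 p then lift (c1 p) ord0 else c2 p.

Lemma c1_neq_mate p : c1 p != mate p.
Proof. by rewrite /mate; case: ifP => [_ | /negbT]; rewrite ?neq_lift // eq_sym. Qed.

Lemma c2_pair p : c2 p \in [:: c1 p; mate p].
Proof. by rewrite /mate !inE; case: ifP; rewrite ?eqxx ?orbT. Qed.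

Definition merged_word (c : rt_word n.+2 m s) : rt_word n.+1 m s :=
  [ffun p => ord_merge (c1 p) (mate p) (c p)].

Lemma merged_code_card : c1 \in D -> c2 \in D -> c1 != c2 ->
  #|merged_word @: (D :\: [set c1; c2])| + 2 <= #|D|.
Proof.
move=> c1D c2D c12.
have c12D : [set c1; c2] \subset D by apply/subsetP => c; rewrite !inE => /pred2P[]->.
rewrite -(cardsID [set c1; c2] D) (setIidPr c12D) cards2 c12 [leqRHS]addnC leq_add2r.
exact: leq_imset_card.
Qed.

Lemma merged_code_onto : R.+2 <= m * s -> onto_off_ideals R D ->
  onto_off_ideals R (merged_word @: (D :\: [set c1; c2])).
Proof.
move=> hR hD x' I hI hIc.
pose x : rt_word n.+2 m s := [ffun p => lift (mate p) (x' p)].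
pose represents e := forall p, p \in ~: I -> ord_merge (c1 p) (mate p) (e p) = x' p.
suff [e eD ex] : exists2 e, e \in D :\: [set c1; c2] & represents e.
  by exists (merged_word e); [exact: imset_f | move=> p pI; rewrite ffunE ex].
have [c cD xc] := hD x I hI hIc.
have merge_x p : ord_merge (c1 p) (mate p) (x p) = x' p by rewrite ffunE ord_merge_lift.
case: (boolP (c \in [set c1; c2])) => [cc12 | cc12]; last first.
  by exists c => [|p pI]; [rewrite inE cc12 | rewrite -xc].
have x_pair p : p \in ~: I -> x p \in [:: c1 p; mate p].
  by move=> pI; rewrite xc //; case/set2P: cc12 => ->; rewrite ?mem_head ?c2_pair.
(* Flipping [x] inside its pair at [q] forces a codeword different from [c]. *)
have flip q : q \in ~: I ->
    exists2 e, e \in D & [/\ e q != c q, {in ~: I :\ q, c =1 e} & represents e].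
  move=> qI; pose y := [ffun p => if p == q then pair_other (c1 p) (mate p) (x p) else x p].
  have [e eD ye] := hD y I hI hIc; exists e => //; split.
  - by rewrite -ye // -xc // ffunE eqxx pair_other_neq ?c1_neq_mate.
  - move=> p; rewrite !inE => /andP[pq pI].
    by rewrite -xc ?inE // -ye ?inE // [y p]ffunE (negbTE pq).
  - move=> p pI; rewrite -ye // ffunE; case: eqP => [-> | _]; last exact: merge_x.
    by rewrite ord_merge_pair ?pair_other_mem // -(ord_merge_pair (x_pair q qI)).
have [p1 [p2 [p1I p2I p12]]] : exists p1 p2, [/\ p1 \in ~: I, p2 \in ~: I & p1 != p2].
  by apply/card_gt1P; rewrite cardsC_rt hIc; lia.
have [e1 e1D [e1c ce1 rep1]] := flip p1 p1I.
have [e2 e2D [e2c ce2 rep2]] := flip p2 p2I.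
have ce1' : c != e1 by apply: contra_neq e1c => ->.
have ce2' : c != e2 by apply: contra_neq e2c => ->.
have e12 : e1 != e2 by apply: contra_neq e1c => ->; rewrite ce2 // in_setD1 p12.
case: (boolP (e1 \in [set c1; c2])) => e1_pair.
  exists e2; rewrite // in_setD e2D andbT in_set2 -mem_seq2.
  by apply: not_three_in_pair ce1' ce2' e12 _ _; rewrite mem_seq2 -in_set2.
by exists e1; rewrite // in_setD e1D e1_pair.
Qed.

End AlphabetReduction.

Lemma alphabet_reduction n m s R (D : {set rt_word n.+2 m s}) :
  R.+2 <= m * s -> onto_off_ideals R D ->
  exists2 D' : {set rt_word n.+1 m s}, onto_off_ideals R D' & #|D'| + 2 <= #|D|.
Proof.
move=> hR hD.
have /card_gt1P[c1 [c2 [c1D c2D c12]]] := onto_off_ideals_card_gt1 (ltnW hR) hD.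
exists (merged_word c1 c2 @: (D :\: [set c1; c2])); first exact: merged_code_onto.
exact: merged_code_card.
Qed.

Lemma inj_restr_onto (aT T rT : finType) (G : {set T}) (f : aT -> T -> rT) :
  #|rT| ^ #|G| <= #|aT| -> (forall a b, {in G, f a =1 f b} -> a = b) ->
  forall y : T -> rT, exists a, {in G, f a =1 y}.
Proof.
move=> hcard finj y.
pose res a : {ffun {x | x \in G} -> rT} := [ffun p => f a (val p)].
have res_inj : injective res.
  move=> a b /ffunP eab; apply: finj => p pG.
  by have := eab (exist _ p pG); rewrite !ffunE.
have /codomP[a ya] : [ffun p => y (val p)] \in codom res.
  by apply: (inj_card_onto res_inj); rewrite card_ffun card_sig.
by exists a => p pG; have /ffunP/(_ (exist _ p pG)) := ya; rewrite !ffunE.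
Qed.

Section Polynomials.
Local Open Scope ring_scope.
Variable F : fieldType.

Lemma dvdp_exp_XsubC_taylor (g : {poly F}) (x : F) (a : nat) :
  (forall k, (k < a)%N -> (g \Po ('X + x%:P))`_k = 0) -> ('X - x%:P) ^+ a %| g.
Proof.
move=> ha; set h := g \Po ('X + x%:P).
have h_low : take_poly a h = 0.
  by apply/polyP => i; rewrite coef_take_poly coef0; case: ifP => // /ha.
rewrite -(comp_polyXaddC_K g x) -/h -(poly_take_drop a h) h_low add0r comp_polyM.
by rewrite rmorphXn /= comp_polyX dvdp_mull.
Qed.

Lemma sum_mult_lt_size (I : eqType) (r : seq I) (pt : I -> F) (a : I -> nat)
    (g : {poly F}) :
  uniq r -> {in r &, injective pt} -> g != 0 ->
  (forall i, i \in r -> ('X - (pt i)%:P) ^+ a i %| g) ->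
  (\sum_(i <- r) a i < size g)%N.
Proof.
elim: r g => [|i r IH] g /=; first by rewrite big_nil lt0n size_poly_eq0.
move=> /andP[ir ru] pt_inj gn0 hdvd; rewrite big_cons.
have /dvdpP[h gh] := hdvd i (mem_head _ _).
have hn0 : h != 0 by apply: contraNneq gn0 => h0; rewrite gh h0 mul0r.
have size_g : size g = (size h + a i)%N.
  by rewrite gh size_mul ?expf_neq0 ?polyXsubC_eq0 // size_exp_XsubC addnS.
suff : (\sum_(j <- r) a j < size h)%N by rewrite size_g; lia.
apply: (IH h ru) => // [j k jr kr | j jr]; first by apply: pt_inj; rewrite inE ?jr ?kr orbT.
have := hdvd j; rewrite inE jr orbT gh Gauss_dvdpl => [->//|].
apply/coprimep_expl/coprimep_expr/coprimep_XsubC2; rewrite subr_eq0.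
apply: contraNneq ir => e; have := pt_inj i j; rewrite !inE eqxx jr orbT.
by move=> /(_ isT isT e) ->.
Qed.

End Polynomials.

Section ReedSolomon.
Local Open Scope ring_scope.
Variables (F : finFieldType) (m s t : nat).

Definition rs_point (i : nat) : F := nth 0 (enum F) i.

(* Block [i < #|F|] holds the Taylor coefficients of [g] at the [i]-th field
   element, the bottom of the chain carrying the highest order; a last block
   [i = #|F|] plays the point at infinity and holds the top coefficients of [g]. *)
Definition rs_eval (g : {poly F}) (p : 'I_m * 'I_s) : F :=
  if (p.1 < #|F|)%N then (g \Po ('X + (rs_point p.1)%:P))`_(s.-1 - p.2)
  else g`_(t - s + p.2).

Lemma rs_evalB g1 g2 p : rs_eval (g1 - g2) p = rs_eval g1 p - rs_eval g2 p.
Proof. by rewrite /rs_eval; case: ifP => _; rewrite ?comp_polyB coefB. Qed.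

Section Kernel.
Variables (I : {set 'I_m * 'I_s}) (g : {poly F}).
Hypotheses (hI : rt_ideal I) (hg0 : {in ~: I, rs_eval g =1 fun=> 0}).

Lemma rs_dvdp_coblock (i : 'I_m) :
  (i < #|F|)%N -> ('X - (rs_point i)%:P) ^+ #|coblock I i| %| g.
Proof.
move=> iF; apply: dvdp_exp_XsubC_taylor => k ka.
have a_le := card_coblock_le I i; have jk : (s.-1 - k < s)%N by lia.
have : (i, Ordinal jk) \in ~: I.
  by rewrite inE coblock_top //=; move: ka a_le; move: #|coblock I i| => a; lia.
by move/hg0; rewrite /rs_eval /= iF subKn => [// |]; lia.
Qed.

Lemma rs_size_coblock (i : 'I_m) : (s <= t)%N -> (size g <= t)%N ->
  ~~ (i < #|F|)%N -> (size g <= t - #|coblock I i|)%N.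
Proof.
move=> hst hg iF; have a_le := card_coblock_le I i.
apply/leq_sizeP => k tk; case: (leqP t k) => [tk' | kt]; first by move/leq_sizeP: hg; apply.
have jk : (k - (t - s) < s)%N by lia.
have : (i, Ordinal jk) \in ~: I.
  by rewrite inE coblock_top //=; move: tk a_le; move: #|coblock I i| => a; lia.
by move/hg0; rewrite /rs_eval /= (negbTE iF) subnKC => [// |]; lia.
Qed.

Lemma rs_eval_kernel : (m <= #|F|.+1)%N -> (s <= t)%N -> #|~: I| = t -> (size g <= t)%N ->
  g = 0.
Proof.
move=> hm hst hIc hg; apply/eqP; apply: contraT => gn0.
pose a i := #|coblock I i|.
have hsum : (\sum_(i : 'I_m | i < #|F|) a i + \sum_(i : 'I_m | ~~ (i < #|F|)) a i)%N = t.
  by rewrite -hIc -sum_card_coblock [RHS](bigID (fun i : 'I_m => i < #|F|)%N).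
have hfin : (\sum_(i : 'I_m | i < #|F|) a i < size g)%N.
  rewrite -big_filter.
  apply: (@sum_mult_lt_size _ _ _ (fun i : 'I_m => rs_point i) a) gn0 _.
  - by rewrite filter_uniq ?index_enum_uniq.
  - move=> i j; rewrite !mem_filter => /andP[iF _] /andP[jF _] /eqP eij.
    by apply/val_inj/eqP; rewrite -(nth_uniq 0 _ _ (enum_uniq F)) -?cardE.
  - by move=> i; rewrite mem_filter => /andP[iF _]; apply: rs_dvdp_coblock.
(* Since [m <= #|F|.+1], only the block [i = #|F|] can sit at infinity. *)
have hinf : (\sum_(i : 'I_m | ~~ (i < #|F|)) a i + size g <= t)%N.
  case: (pickP (fun i : 'I_m => ~~ (i < #|F|)%N)) => [i0 i0F | none]; last first.
    by rewrite big_pred0.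
  rewrite (big_pred1 i0) => [|i /=].
    by move: (rs_size_coblock hst hg i0F) (card_coblock_le I i0); rewrite -/(a i0); lia.
  apply/idP/eqP => [iF | ->]; [apply: ord_inj | exact: i0F].
  by move: i0F iF hm (ltn_ord i) (ltn_ord i0); rewrite -!leqNgt; move: #|F| => q; lia.
lia.
Qed.

End Kernel.

Definition rs_word (g : {poly_t F}) : rt_word #|F| m s :=
  [ffun p => enum_rank (rs_eval g p)].

Lemma rs_code_onto : (m <= #|F|.+1)%N -> (s <= t)%N -> (t <= m * s)%N ->
  onto_off_ideals (m * s - t) [set rs_word g | g : {poly_t F}].
Proof.
move=> hm hst htm x I hI hIc.
have hGc : #|~: I| = t by rewrite cardsC_rt hIc; lia.
have [|g1 g2 g12|g xg] :=
  @inj_restr_onto _ _ _ (~: I) (fun g : {poly_t F} => rs_eval g) _ _ (fun p => enum_val (x p)).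
- by rewrite card_npoly hGc.
- apply/val_inj/eqP; rewrite -subr_eq0 -raddfB /=; apply/eqP.
  apply: (rs_eval_kernel hI _ hm hst hGc (size_npoly (g1 - g2))) => p pI.
  by rewrite raddfB rs_evalB; apply/eqP; rewrite subr_eq0; apply/eqP/g12.
by exists (rs_word g); [exact: imset_f | move=> p pI; rewrite ffunE xg // enum_valK].
Qed.

Lemma card_rs_code : (#|[set rs_word g | g : {poly_t F}]| <= #|F| ^ t)%N.
Proof. by rewrite -card_npoly leq_imset_card. Qed.

End ReedSolomon.

Lemma prime_power_gt1 q : prime_power q -> 1 < q.
Proof.
case=> p [k [hp [hk ->]]]; apply: leq_trans (prime_gt1 hp) _.
by rewrite -{1}(expn1 p); apply: leq_pexp2l (prime_gt0 hp) hk.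
Qed.

Lemma rt_mds_code q m s t : prime_power q -> m <= q.+1 -> s <= t -> t <= m * s ->
  exists2 D : {set rt_word q m s}, onto_off_ideals (m * s - t) D & #|D| <= q ^ t.
Proof.
case=> p [k [hp [hk ->]]] hm hst htm; have [F _ hF] := pPrimePowerField hp hk.
rewrite -hF in hm *.
by exists [set rs_word m s g | g : {poly_t F}]; [exact: rs_code_onto | exact: card_rs_code].
Qed.

Theorem corollary6 :
  (forall q v m s t : nat,
      prime_power q -> 2 <= v -> 0 < m -> 0 < s -> 2 <= t ->
      m <= q + 1 -> s <= t -> t <= m * s ->
      K_RT (q * v) m s (m * s - t) <= q ^ t * K_RT v m s (m * s - t))
  /\
  (forall q v t : nat,
      prime_power q -> 2 <= v -> 2 <= t ->
      K_RT ((q - 1) * v) (q + 1) t (q * t) <= (q ^ t - 2) * K_RT v (q + 1) t (q * t)).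
Proof.
split=> [q v m s t hq _ _ _ _ hm hst htm | q v t hq _ ht].
  rewrite addn1 in hm; have [D hD Dq] := rt_mds_code hq hm hst htm.
  by apply: leq_trans (K_RT_mul_le v (leq_subr _ _) hD) _; rewrite leq_mul2r Dq orbT.
have [n qn] : exists n, q = n.+2 by exists (q - 2); have := prime_power_gt1 hq; lia.
subst q; rewrite addn1.
have [D hD Dq] := rt_mds_code (m := n.+3) hq (leqnn _) (leqnn t) (leq_pmull t (ltn0Sn _)).
rewrite mulSn addKn in hD.
have hR : (n.+2 * t).+2 <= n.+3 * t by nia.
have [D' hD' D'D] := alphabet_reduction hR hD.
apply: leq_trans (K_RT_mul_le v (ltnW (ltnW hR)) hD') _.
by rewrite leq_mul2r; apply/orP; right; lia.
Qed.
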